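(* Let $(H,f)$ be a vertex-weighted graph with $H$ connected and $f$ not identically zero, and let $G=L(H,f)$. If $k(G)=1$, then at least one of the following holds: (i) $f(v)=1$ for some vertex $v$ of $H$; (ii) there exists a vertex $v$ of $H$ with $f(v)=0$ such that $K_H(v)$ contains a simplicial vertex of $G$.
   Context: All graphs are finite and simple. For a digraph $D$, its competition graph $C(D)$ has vertex set $V(D)$, two distinct vertices $u,v$ adjacent iff some vertex $x$ satisfies $(u,x),(v,x)\in A(D)$. The competition number $k(G)$ is the smallest nonnegative integer $k$ such that $G$ together with $k$ new isolated vertices is the competition graph of an acyclic digraph. For a positive integer $m$, $CP(m)$ is the complete multipartite graph with $m$ parts each of size two. A vertex-weighted graph $(H,f)$ is a graph $H$ with $f:V(H)\to\mathbb{Z}_{\ge0}$. The generalized line graph $L(H,f)$ is obtained from the disjoint union of the line graph $L(H)$ (vertex set $E(H)$, two distinct edges adjacent iff they share an endpoint) and the graphs $Q_v:=CP(f(v))$ for each $v$ with $f(v)>0$, by adding all edges between every vertex of $Q_v$ and every $e\in E(H)$ incident to $v$. $K_H(v)$ is the set of edges of $H$ incident to $v$. A vertex is simplicial if its neighborhood is a clique. *)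

From HB Require Import structures.
From mathcomp Require Import all_boot.
Set Implicit Arguments. Unset Strict Implicit. Unset Printing Implicit Defensive.

Definition acyclic (U : finType) (D : rel U) : Prop :=
  forall x y : U, D x y -> ~~ connect D y x.

Definition comp_graph (U : finType) (D : rel U) : rel U :=
  fun u v => (u != v) && [exists x, D u x && D v x].

Definition add_isolated (V : finType) (adj : rel V) (k : nat) : rel (V + 'I_k) :=
  fun a b => match a, b with inl u, inl v => adj u v | _, _ => false end.

Arguments add_isolated {V} adj k.

Definition comp_feasible (V : finType) (adj : rel V) (k : nat) : Prop :=
  exists D : rel (V + 'I_k), acyclic D /\ comp_graph D =2 add_isolated adj k.

Definition competition_number (V : finType) (adj : rel V) (k : nat) : Prop :=
  comp_feasible adj k /\ forall j, j < k -> ~ comp_feasible adj j.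

Definition simplicial (V : finType) (adj : rel V) (x : V) : Prop :=
  forall y z, adj x y -> adj x z -> y != z -> adj y z.

Definition is_edge (T : finType) (h : rel T) (e : {set T}) : bool :=
  [exists x, exists y, h x y && (e == [set x; y])].

Definition edge_type (T : finType) (h : rel T) := {e : {set T} | is_edge h e}.

(* Vertices of Q_v = CP(f v): pairs (i, b), i < f v (the part), b : bool. *)
Definition cp_type (T : finType) (f : T -> nat) := {v : T & ('I_(f v) * bool)%type}.

Definition gl_vertex (T : finType) (h : rel T) (f : T -> nat) :=
  (edge_type h + cp_type f)%type.

Definition gl_adj (T : finType) (h : rel T) (f : T -> nat) : rel (gl_vertex h f) :=
  fun a b =>
    match a, b with
    | inl e1, inl e2 => (e1 != e2) && [exists x, (x \in val e1) && (x \in val e2)]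
    | inr q1, inr q2 => (tag q1 == tag q2) &&
                          (nat_of_ord (tagged q1).1 != nat_of_ord (tagged q2).1)
    | inl e, inr q => tag q \in val e
    | inr q, inl e => tag q \in val e
    end.
Arguments edge_type {T} h.
Arguments cp_type {T} f.
Arguments gl_vertex {T} h f.
Arguments gl_adj {T} h f a b.

From mathcomp Require Import all_boot.

Set Implicit Arguments.
Unset Strict Implicit.

(* If G plus one isolated vertex z is the competition graph of an acyclic
   digraph D, a vertex x of G that is a sink of D restricted to G can only
   prey on z; then all neighbours of x prey on z, so they form a clique.  In
   L(H,f), every vertex of Q_v with f(v) >= 2, and every edge at a vertex v
   with f(v) >= 1, has two non-adjacent neighbours: the two vertices of one
   part of Q_v.  A simplicial vertex must therefore lie in some Q_v with
   f(v) = 1, or be an edge whose endpoints have weight 0. *)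

Section AcyclicSink.

Variables (U : finType) (D : rel U).
Hypothesis acD : acyclic D.

Lemma acyclic_exists_sink (P : pred U) (x0 : U) :
  P x0 -> exists2 x, P x & forall y, P y -> ~~ D x y.
Proof.
move=> Px0; pose reach y := #|[set w | connect D y w]|.
have [x Px minx] := @arg_minnP U x0 P reach Px0.
exists x => // y Py; apply/negP => Dxy.
have reach_lt : [set w | connect D y w] \proper [set w | connect D x w].
  apply/properP; split.
    by apply/subsetP => w; rewrite !inE; apply: connect_trans (connect1 Dxy).
  by exists x; rewrite inE ?connect0 ?acD.
by move: (proper_card reach_lt); rewrite ltnNge minx.
Qed.

End AcyclicSink.

Lemma comp_feasible1_simplicial (V : finType) (adj : rel V) (x0 : V) :
  comp_feasible adj 1 -> exists x, simplicial adj x.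
Proof.
case=> D [acD compD].
have [[x|//] _ sink_x] := acyclic_exists_sink acD (isT : is_inl (inl x0)).
have prey_z y : adj x y -> D (inl y) (inr ord0).
  move=> axy; have := compD (inl x) (inl y); rewrite /= axy.
  case/andP=> _ /existsP [[w|i] /andP [Dxw Dyw]].
    by have := sink_x (inl w) isT; rewrite Dxw.
  by rewrite (ord1 i) in Dyw.
exists x => y z axy axz neq_yz; rewrite -[adj y z]/(add_isolated adj 1 (inl y) (inl z)).
by rewrite -compD /comp_graph /= neq_yz; apply/existsP; exists (inr ord0); rewrite !prey_z.
Qed.

Lemma not_simplicial (V : finType) (adj : rel V) (x y z : V) :
  adj x y -> adj x z -> y != z -> ~~ adj y z -> ~ simplicial adj x.
Proof. by move=> axy axz neq_yz /negP nadj_yz /(_ y z axy axz neq_yz). Qed.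

Section GeneralizedLineGraph.

Variables (T : finType) (h : rel T) (f : T -> nat).

Definition cp_vertex (v : T) (i : 'I_(f v)) (b : bool) : gl_vertex h f :=
  inr (existT _ v (i, b)).

Lemma cp_twins_neq (v : T) (i : 'I_(f v)) : cp_vertex i true != cp_vertex i false.
Proof.
apply/negP => /eqP eq_tw.
by have := congr1 (fun w : gl_vertex h f => if w is inr q then (tagged q).2 else false) eq_tw.
Qed.

Lemma cp_twins_nonadj (v : T) (i : 'I_(f v)) :
  ~~ gl_adj h f (cp_vertex i true) (cp_vertex i false).
Proof. by rewrite /cp_vertex /= !eqxx. Qed.

Lemma edge_not_simplicial (e : edge_type h) (v : T) :
  v \in val e -> 0 < f v -> ~ simplicial (gl_adj h f) (inl e).
Proof.
move=> ve fv_gt0; pose i := Ordinal fv_gt0.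
by apply: (not_simplicial _ _ (cp_twins_neq i) (cp_twins_nonadj i)).
Qed.

Lemma cp_not_simplicial (v : T) (i : 'I_(f v)) (b : bool) :
  1 < f v -> ~ simplicial (gl_adj h f) (cp_vertex i b).
Proof.
move=> fv_gt1.
have [j neq_ji] : exists j : 'I_(f v), nat_of_ord j != i.
  have [i0|i_gt0] := posnP i; first by exists (Ordinal fv_gt1); rewrite i0.
  by exists (Ordinal (ltnW fv_gt1)); rewrite eq_sym -lt0n.
apply: (not_simplicial _ _ (cp_twins_neq j) (cp_twins_nonadj j));
  by rewrite /= eqxx // eq_sym.
Qed.

Lemma edge_has_endpoint (e : edge_type h) : exists v, v \in val e.
Proof.
by case/existsP: (valP e) => v /existsP [w /andP [_ /eqP ->]]; exists v; rewrite set21.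
Qed.

End GeneralizedLineGraph.

Unset Implicit Arguments.

Theorem theorem2p8 (T : finType) (h : rel T) (f : T -> nat)
  (h_sym : symmetric h) (h_irr : irreflexive h)
  (h_conn : forall x y : T, connect h x y)
  (f_nz : exists v : T, f v != 0)
  (kG1 : competition_number (gl_adj h f) 1) :
  (exists v : T, f v = 1) \/
  (exists v : T, f v = 0 /\
     exists e : edge_type h, v \in val e /\ simplicial (gl_adj h f) (inl e)).
Proof.
have [v0 fv0_gt0] : exists v, 0 < f v by case: f_nz => v; rewrite -lt0n; exists v.
have [[e|[v [i b]]] simp_x] := comp_feasible1_simplicial (cp_vertex h (Ordinal fv0_gt0) true) kG1.1.
- have [v ve] := edge_has_endpoint e.
  have [fv0|fv_gt0] := posnP (f v); first by right; exists v; split; last exists e.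
  by case: (edge_not_simplicial ve fv_gt0 simp_x).
- have [fv1|fv_neq1] := eqVneq (f v) 1; first by left; exists v.
  have fv_gt1 : 1 < f v by rewrite ltn_neqAle eq_sym fv_neq1 (leq_ltn_trans _ (ltn_ord i)).
  by case: (cp_not_simplicial fv_gt1 simp_x).
Qed.
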